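(* Let $d\ge 2$. Up to isomorphism there is exactly one primitive $d$-uniform monomial sunflower whose sunflower has a core of size $d-1$. Its multiset of edges consists of $2d+2$ distinct edges, each of multiplicity one: $2d$ petals and $2$ matching edges.
   Context: A hypergraph is $d$-uniform if every edge has exactly $d$ vertices. A sunflower is a $d$-uniform hypergraph with at least two edges (petals) such that any two distinct petals intersect exactly in a fixed nonempty set $C$, the core. A $d$-uniform monomial sunflower is a multihypergraph $\mathcal H$ whose support (its set of distinct edges) consists of two parts: - a sunflower; - a perfect matching of the sunflower's non-core vertices by $d$-element edges disjoint from the core. It is also required that the edge copies of $\mathcal H$ admit a balanced bicolouring, i.e. a red/blue colouring such that every vertex lies in equally many red as blue copies. $\mathcal H$ is primitive if some balanced bicolouring has no nonempty proper balanced sub-multiset with colours kept. *)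

From mathcomp Require Import all_boot.
Set Implicit Arguments. Unset Strict Implicit. Unset Printing Implicit Defensive.

(* A finite multihypergraph on a finite vertex type T is given by its
   multiplicity function m : {set T} -> nat (m E = number of copies of E). *)
Section MS.
Variable T : finType.
Implicit Types (m r b : {set T} -> nat) (C : {set T}) (P M : {set {set T}}).

Definition ms_support m : {set {set T}} := [set E | 0 < m E].

Definition vertices m : {set T} := cover (ms_support m).

Definition uniform (d : nat) m := forall E, 0 < m E -> #|E| = d.

Definition balanced r b :=
  forall x : T, \sum_(E : {set T} | x \in E) r E = \sum_(E : {set T} | x \in E) b E.

(* A bicolouring of the copies of m: r E of the m E copies of E are red,
   the remaining m E - r E are blue. *)
Definition balanced_bicolouring m r :=
  (forall E, r E <= m E) /\ balanced r (fun E => m E - r E).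

Definition is_sunflower (d : nat) P C :=
  [/\ 2 <= #|P|, C != set0, (forall E, E \in P -> #|E| = d)
    & (forall E1 E2, E1 \in P -> E2 \in P -> E1 != E2 -> E1 :&: E2 = C)].

Definition core_matching (d : nat) P C M :=
  [/\ (forall E, E \in M -> #|E| = d),
      (forall E, E \in M -> [disjoint E & C]),
      (forall E1 E2, E1 \in M -> E2 \in M -> E1 != E2 -> [disjoint E1 & E2])
    & cover M = cover P :\: C].

Definition monomial_sunflower (d : nat) m C P M :=
  [/\ uniform d m, ms_support m = P :|: M, is_sunflower d P C,
      core_matching d P C M & exists r, balanced_bicolouring m r].

Definition primitive m :=
  exists r, balanced_bicolouring m r /\
   forall r' b' : {set T} -> nat,
     (forall E, r' E <= r E) -> (forall E, b' E <= m E - r E) ->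
     balanced r' b' -> (exists E, 0 < r' E + b' E) ->
     forall E, r' E = r E /\ b' E = m E - r E.

Definition prim_ms_core (d : nat) m :=
  primitive m /\ exists C P M, monomial_sunflower d m C P M /\ #|C| = d - 1.

End MS.

Definition mh_isomorphic (T1 T2 : finType) (m1 : {set T1} -> nat)
    (m2 : {set T2} -> nat) :=
  exists f : T1 -> T2,
    [/\ {in vertices m1 &, injective f}, f @: vertices m1 = vertices m2
      & forall E : {set T1}, E \subset vertices m1 -> m2 (f @: E) = m1 E].

From mathcomp Require Import all_boot zify.
Set Implicit Arguments. Unset Strict Implicit. Unset Printing Implicit Defensive.

(* Let C (|C| = d - 1) be the core, P the petals and M the matching.  A petal has
   d vertices and contains C, so it is C plus one non-core vertex y; y lies on
   exactly one matching edge.  Hence a colouring r (red) / b (blue) is balanced iff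
   the petals carry as many red as blue copies (the equation at a core vertex) and
   r e + r (C + y) = b e + b (C + y) for every vertex y of a matching edge e
   (balanced_criterion).  If the colouring is primitive, some matching edge e1 has
   a blue surplus and some e2 a red surplus (opposite_matching_edges).  The model
   on (C, e1, e2) -- red copies e2 and the petals C + y, y in e1; blue copies e1
   and the petals C + y, y in e2 -- is balanced and lies below the given colouring,
   so by primitivity it is the whole multihypergraph (primitive_skeleton_model).
   Conversely the model is primitive, has 2d petals, 2 matching edges and only
   simple edges (model_indecomposable, model_shape), and two models with the same
   d are isomorphic through any bijections between corresponding vertex classes
   (model_iso). *)

Section SetFacts.
Variable T : finType.
Implicit Types A B : {set T}.

Lemma sum_disjointU A B (f : T -> nat) : [disjoint A & B] ->
  \sum_(x in A :|: B) f x = \sum_(x in A) f x + \sum_(x in B) f x.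
Proof. by move=> dAB; rewrite -bigU //; apply: eq_bigl => x; rewrite !inE. Qed.

Lemma cards_disjointU A B : [disjoint A & B] -> #|A :|: B| = #|A| + #|B|.
Proof. by move=> dAB; rewrite -cardsUI (disjoint_setI0 dAB) cards0 addn0. Qed.

Lemma sum_eq_from_ge (A : {set T}) (F G : T -> nat) :
  (forall x, x \in A -> G x <= F x) ->
  \sum_(x in A) F x = \sum_(x in A) G x -> {in A, F =1 G}.
Proof.
move=> GF eqFG x xA.
have /leqif_sum [_] : forall y, y \in A -> G y <= F y ?= iff (G y == F y).
  by move=> y /GF /leqif_eq.
by rewrite eqFG eqxx => /esym/forall_inP/(_ x xA)/eqP.
Qed.

End SetFacts.

Lemma mem_imset_in (aT rT : finType) (f : aT -> rT) (V S : {set aT}) x :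
  {in V &, injective f} -> S \subset V -> x \in V -> (f x \in f @: S) = (x \in S).
Proof.
move=> inj SV xV; apply/imsetP/idP => [[y yS fxy] | xS]; last by exists x.
by rewrite (inj x y xV (subsetP SV y yS) fxy).
Qed.

Lemma imset_inj_in (aT rT : finType) (f : aT -> rT) (V : {set aT}) :
  {in V &, injective f} -> {in powerset V &, injective (fun A : {set aT} => f @: A)}.
Proof.
move=> inj A B; rewrite !inE => AV BV /= fAB; apply/setP => x.
have [xV | xnV] := boolP (x \in V).
  by rewrite -(mem_imset_in inj AV xV) fAB (mem_imset_in inj BV xV).
by rewrite (contraNF (subsetP AV x) xnV) (contraNF (subsetP BV x) xnV).
Qed.

Definition petal (T : finType) (C : {set T}) (y : T) : {set T} := y |: C.

Section Petals.
Variables (T : finType) (C : {set T}).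

Lemma petal_inj y z : y \notin C -> petal C y = petal C z -> y = z.
Proof.
move=> yC eqyz; have : y \in petal C z by rewrite -eqyz setU11.
by rewrite in_setU1 (negbTE yC) orbF => /eqP.
Qed.

Lemma card_petal y : y \notin C -> #|petal C y| = #|C|.+1.
Proof. by move=> yC; rewrite cardsU1 yC. Qed.

End Petals.

Definition degree (T : finType) (f : {set T} -> nat) (x : T) : nat :=
  \sum_(E : {set T} | x \in E) f E.

Definition indecomposable (T : finType) (m r : {set T} -> nat) :=
  forall r' b' : {set T} -> nat,
    (forall E, r' E <= r E) -> (forall E, b' E <= m E - r E) ->
    balanced r' b' -> (exists E, 0 < r' E + b' E) ->
    forall E, r' E = r E /\ b' E = m E - r E.

Definition skeleton (T : finType) (d : nat) (m : {set T} -> nat) (C : {set T})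
    (P M : {set {set T}}) :=
  [/\ ms_support m = P :|: M, is_sunflower d P C, core_matching d P C M
    & #|C| = d - 1].

Lemma skeleton_of_monomial (T : finType) d (m : {set T} -> nat) C P M :
  monomial_sunflower d m C P M -> #|C| = d - 1 -> skeleton d m C P M.
Proof. by case. Qed.

Lemma ms_support_eq (T : finType) (m m' : {set T} -> nat) :
  m =1 m' -> ms_support m = ms_support m'.
Proof. by move=> mm'; apply/setP => E; rewrite !inE mm'. Qed.

Section Skeleton.
#[local] Set Default Proof Using "All".
Variables (T : finType) (d : nat) (m : {set T} -> nat) (C : {set T}).
Variables (P M : {set {set T}}).
Hypothesis S : skeleton d m C P M.

Lemma skeleton_support : ms_support m = P :|: M. Proof. by case: S. Qed.
Lemma core_neq0 : C != set0. Proof. by case: S => _ []. Qed.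
Lemma card_core : #|C| = d - 1. Proof. by case: S. Qed.
Lemma card_petal_edge E : E \in P -> #|E| = d.
Proof. by case: S => _ [_ _ + _] _ _; apply. Qed.
Lemma card_matching_edge E : E \in M -> #|E| = d.
Proof. by case: S => _ _ [+ _ _ _] _; apply. Qed.
Lemma matching_core_disjoint E : E \in M -> [disjoint E & C].
Proof. by case: S => _ _ [_ + _ _] _; apply. Qed.
Lemma matching_disjoint E E' : E \in M -> E' \in M -> E != E' -> [disjoint E & E'].
Proof. by case: S => _ _ [_ _ + _] _; apply. Qed.
Lemma cover_matching : cover M = cover P :\: C. Proof. by case: S => _ _ []. Qed.

Lemma dim_gt1 : 1 < d.
Proof. by have := card_core; move: core_neq0; rewrite -card_gt0; lia. Qed.

Lemma petals_neq0 : P != set0.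
Proof. by rewrite -card_gt0; case: S => _ [+ _ _ _] _ _; lia. Qed.

(* Two distinct petals meet exactly in the core, so every petal contains it. *)
Lemma core_sub_petal E : E \in P -> C \subset E.
Proof.
move=> EP; case: S => _ [P2 _ _ meetC] _ _.
have : 0 < #|P :\ E| by move: P2; rewrite (cardsD1 E) EP.
rewrite card_gt0 => /set0Pn [E' /setD1P [E'E E'P]].
by rewrite -(meetC E E') // 1?eq_sym // subsetIl.
Qed.

Lemma core_not_sub_matching E : E \in M -> ~~ (C \subset E).
Proof.
move=> EM; apply/negP => CE; have /set0Pn [c cC] := core_neq0.
by have := disjointFl (matching_core_disjoint EM) cC; rewrite (subsetP CE).
Qed.

Lemma petal_notin_matching E : E \in P -> E \notin M.
Proof.
by move=> EP; apply: contraL (core_sub_petal EP); apply: core_not_sub_matching.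
Qed.

(* Since #|C| = d - 1, a petal is the core plus any one of its non-core vertices. *)
Lemma petalE E y : E \in P -> y \in E -> y \notin C -> E = petal C y.
Proof.
move=> EP yE yC; apply/eqP; rewrite eq_sym eqEcard subUset sub1set yE core_sub_petal //=.
by rewrite card_petal // card_core (card_petal_edge EP); have := dim_gt1; lia.
Qed.

Lemma matched_petal e y : e \in M -> y \in e -> y \notin C /\ petal C y \in P.
Proof.
move=> eM ye; have yC : y \notin C by rewrite (disjointFr (matching_core_disjoint eM) ye).
have : y \in cover M by apply/bigcupP; exists e.
rewrite cover_matching inE (negbTE yC) => /bigcupP [E EP yE].
by rewrite -(petalE EP yE yC).
Qed.

Lemma petal_matched E :
  E \in P -> exists2 e, e \in M & exists2 y, y \in e & E = petal C y.
Proof.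
move=> EP; have /subsetPn [y yE yC] : ~~ (E \subset C).
  apply/negP => /subset_leq_card; rewrite (card_petal_edge EP) card_core.
  by have := dim_gt1; lia.
have : y \in cover M by rewrite cover_matching inE yC; apply/bigcupP; exists E.
by case/bigcupP => e eM ye; exists e => //; exists y; last exact: petalE.
Qed.

Lemma matching_edge_unique e e' y : e \in M -> e' \in M -> y \in e -> y \in e' -> e = e'.
Proof.
move=> eM e'M ye ye'; apply/eqP; apply: contraTT ye' => ne.
by rewrite (disjointFr (matching_disjoint eM e'M ne) ye).
Qed.

Lemma petals_in_support : P = [set E in ms_support m | C \subset E].
Proof.
apply/setP => E; rewrite inE skeleton_support inE.
case EP: (E \in P) => /=; first by rewrite core_sub_petal.
by case EM: (E \in M); rewrite // (negbTE (core_not_sub_matching EM)).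
Qed.

Lemma matching_in_support : M = [set E in ms_support m | ~~ (C \subset E)].
Proof.
apply/setP => E; rewrite inE skeleton_support inE.
case EM: (E \in M); first by rewrite orbT core_not_sub_matching.
by case EP: (E \in P); rewrite // core_sub_petal.
Qed.

Lemma vertices_skeleton : vertices m = C :|: cover M.
Proof.
apply/setP => x; rewrite /vertices skeleton_support inE; apply/bigcupP/orP.
  case=> E /setUP [EP | EM] xE; last by right; apply/bigcupP; exists E.
  case xC: (x \in C); [by left | right].
  by rewrite cover_matching inE xC; apply/bigcupP; exists E.
case=> [xC | /bigcupP [E EM xE]]; last by exists E; rewrite // inE EM orbT.
have /set0Pn [E EP] := petals_neq0.
by exists E; rewrite ?inE ?EP // (subsetP (core_sub_petal EP)).
Qed.

Lemma skeleton_uniform : uniform d m.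
Proof.
move=> E mE; have : E \in P :|: M by rewrite -skeleton_support inE.
by case/setUP; [apply: card_petal_edge | apply: card_matching_edge].
Qed.

Lemma card_support : #|ms_support m| = #|P| + #|M|.
Proof.
rewrite skeleton_support cards_disjointU // -setI_eq0; apply/eqP/setP => E.
by rewrite !inE; apply/andP => -[/petal_notin_matching/negbTE ->].
Qed.

Lemma monomial_of_skeleton :
  (exists r, balanced_bicolouring m r) -> monomial_sunflower d m C P M.
Proof. by case: S => *; split; rewrite //; apply: skeleton_uniform. Qed.

Section Degrees.
Variable f : {set T} -> nat.
Hypothesis f_le_m : forall E, f E <= m E.

Lemma vanish_off_support E : E \notin P :|: M -> f E = 0.
Proof.
rewrite -skeleton_support inE -leqNgt leqn0 => /eqP mE0.
by apply/eqP; rewrite -leqn0 -mE0.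
Qed.

(* A core vertex lies on every petal and on no matching edge. *)
Lemma degree_core c : c \in C -> degree f c = \sum_(E in P) f E.
Proof.
move=> cC; rewrite /degree big_mkcond [RHS]big_mkcond; apply: eq_bigr => E _.
case: (boolP (E \in P)) => [EP | EnP]; first by rewrite (subsetP (core_sub_petal EP)).
case: ifP => // cE; apply: vanish_off_support; rewrite inE (negbTE EnP).
by apply: contraL cE => /matching_core_disjoint/disjointFl ->.
Qed.

(* A matched vertex lies on its matching edge and on its petal only. *)
Lemma degree_matched e y : e \in M -> y \in e -> degree f y = f e + f (petal C y).
Proof.
move=> eM ye; have [yC pP] := matched_petal eM ye.
have pe : petal C y != e by apply: contraNneq (petal_notin_matching pP) => ->.
rewrite /degree (bigD1 e) // (bigD1 (petal C y)) /= ?setU11 ?pe // big1 ?addn0 //.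
move=> E /andP [/andP [yE Ee] Ep]; apply: vanish_off_support; rewrite inE negb_or.
apply/andP; split.
  by apply: contra Ep => EP; rewrite (petalE EP yE yC).
by apply: contra Ee => EM; rewrite (matching_edge_unique EM eM yE ye).
Qed.

Lemma degree_outside x : x \notin C -> x \notin cover M -> degree f x = 0.
Proof.
move=> xC xM; rewrite /degree big1 // => E xE; apply: vanish_off_support.
rewrite inE negb_or; apply/andP; split; apply: contra xM => EM.
  by rewrite cover_matching inE xC; apply/bigcupP; exists E.
by apply/bigcupP; exists E.
Qed.

End Degrees.

Lemma balanced_criterion r b : (forall E, r E <= m E) -> (forall E, b E <= m E) ->
  balanced r b <->
  \sum_(E in P) r E = \sum_(E in P) b E /\
  (forall e y, e \in M -> y \in e -> r e + r (petal C y) = b e + b (petal C y)).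
Proof.
move=> rm bm; split => [bal | [core matched] x].
  have /set0Pn [c cC] := core_neq0.
  split; first by rewrite -(degree_core rm cC) -(degree_core bm cC); exact: bal c.
  move=> e y eM ye; rewrite -(degree_matched rm eM ye) -(degree_matched bm eM ye).
  exact: bal y.
change (degree r x = degree b x).
have [xC | xnC] := boolP (x \in C).
  by rewrite (degree_core rm xC) (degree_core bm xC).
have [/bigcupP [e eM xe] | xnM] := boolP (x \in cover M).
  by rewrite (degree_matched rm eM xe) (degree_matched bm eM xe) matched.
by rewrite !degree_outside.
Qed.

(* Surplus of one colour on a matching edge forces surplus of the other colour on
   another one: the matched-vertex equations transfer it to the petals, whose
   totals agree. *)
Lemma opposite_imbalance r b :
  \sum_(E in P) r E = \sum_(E in P) b E ->
  (forall e y, e \in M -> y \in e -> r e + r (petal C y) = b e + b (petal C y)) ->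
  (exists2 e, e \in M & r e < b e) -> exists2 e, e \in M & b e < r e.
Proof.
move=> core matched [e0 e0M lt0].
have [/exists_inP [e eM lt] | /exists_inP none] := boolP [exists e in M, b e < r e].
  by exists e.
have petal_ge E : E \in P -> b E <= r E.
  move=> EP; have [e eM [y ye ->]] := petal_matched EP.
  have : ~~ (b e < r e) by apply/negP => lt; apply: none; exists e.
  by have := matched e y eM ye; lia.
have petal_eq := sum_eq_from_ge petal_ge core.
have /set0Pn [y ye] : e0 != set0.
  by rewrite -card_gt0 (card_matching_edge e0M); have := dim_gt1; lia.
have [_ pP] := matched_petal e0M ye.
by have := matched e0 y e0M ye; rewrite (petal_eq _ pP); lia.
Qed.

(* In an indecomposable colouring some matching edge has unequally many red and
   blue copies: otherwise one red and one blue copy of a petal would already form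
   a proper balanced part. *)
Lemma unbalanced_matching_edge r : balanced_bicolouring m r -> indecomposable m r ->
  exists2 e, e \in M & r e != m e - r e.
Proof.
move=> [rm bal] indec.
have [/exists_inP // | /exists_inP none] := boolP [exists e in M, r e != m e - r e].
exfalso; have bm E : m E - r E <= m E := leq_subr (r E) (m E).
have [_ matched] := (balanced_criterion rm bm).1 bal.
have /set0Pn [p pP] := petals_neq0.
have [e eM [y ye pE]] := petal_matched pP.
have in_supp E : E \in P :|: M -> 0 < m E by rewrite -skeleton_support inE.
have mp : 0 < m p by apply: in_supp; rewrite inE pP.
have me : 0 < m e by apply: in_supp; rewrite inE eM orbT.
have req : r e = m e - r e by apply/eqP; apply/negPn/negP => ne; apply: none; exists e.
have := matched e y eM ye; rewrite -pE req => rp.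
have ep : (e == p) = false.
  by apply/negbTE; apply: contraNneq (petal_notin_matching pP) => <-.
have sub E : (E == p) <= r E /\ (E == p) <= m E - r E.
  by case: eqP => [-> | //]; have := rm p; lia.
have one_petal : exists E, 0 < (E == p) + (E == p) by exists p; rewrite eqxx.
have [] := indec _ _ (fun E => (sub E).1) (fun E => (sub E).2) (fun _ => erefl)
  one_petal e.
by rewrite ep; lia.
Qed.

Lemma opposite_matching_edges r : balanced_bicolouring m r -> indecomposable m r ->
  exists e1 e2, [/\ e1 \in M, e2 \in M, r e1 < m e1 - r e1 & m e2 - r e2 < r e2].
Proof.
move=> bic indec; have [rm bal] := bic.
have [core matched] := (balanced_criterion rm (fun E => leq_subr (r E) (m E))).1 bal.
have [e0 e0M ne] := unbalanced_matching_edge bic indec.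
case: ltngtP ne => // lt _.
  have [e2 e2M lt2] := opposite_imbalance core matched (ex_intro2 _ _ e0 e0M lt).
  by exists e0, e2.
have [e1 e1M lt1] := opposite_imbalance (esym core)
  (fun e y eM ye => esym (matched e y eM ye)) (ex_intro2 _ _ e0 e0M lt).
by exists e1, e0.
Qed.

End Skeleton.

Lemma skeleton_unique (T : finType) d (m m' : {set T} -> nat) C P M P' M' :
  skeleton d m C P M -> skeleton d m' C P' M' -> m =1 m' -> P = P' /\ M = M'.
Proof.
move=> S S' /ms_support_eq mm'.
by rewrite (petals_in_support S) (petals_in_support S') (matching_in_support S)
  (matching_in_support S') mm'.
Qed.

Record model_data (T : finType) (d : nat) (C e1 e2 : {set T}) : Prop := ModelData {
  model_dim : 1 < d;
  model_card_core : #|C| = d - 1;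
  model_card_e1 : #|e1| = d;
  model_card_e2 : #|e2| = d;
  model_disj_e1 : [disjoint e1 & C];
  model_disj_e2 : [disjoint e2 & C];
  model_disj_e12 : [disjoint e1 & e2] }.

Definition model_red (T : finType) (C e1 e2 E : {set T}) : nat :=
  (E == e2) + (E \in petal C @: e1).

Definition model (T : finType) (C e1 e2 E : {set T}) : nat :=
  model_red C e1 e2 E + model_red C e2 e1 E.

Lemma model_data_sym (T : finType) d (C e1 e2 : {set T}) :
  model_data d C e1 e2 -> model_data d C e2 e1.
Proof. by case=> *; split; rewrite // disjoint_sym. Qed.

Section Model.
#[local] Set Default Proof Using "All".
Variables (T : finType) (d : nat) (C e1 e2 : {set T}).
Hypothesis D : model_data d C e1 e2.

Lemma model_notin_core y : y \in e1 :|: e2 -> y \notin C.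
Proof.
have [_ _ _ _ d1 d2 _] := D.
by case/setUP => ye; [rewrite (disjointFr d1 ye) | rewrite (disjointFr d2 ye)].
Qed.

Lemma model_matching_neq : e1 != e2.
Proof.
have [d2 _ c1 _ _ _ d12] := D; apply: contraTneq d12 => <-.
by rewrite -setI_eq0 setIid -card_gt0 c1; lia.
Qed.

Lemma card_model_petals : #|petal C @: (e1 :|: e2)| = 2 * d.
Proof.
rewrite card_in_imset => [|y z /model_notin_core yC _]; last exact: petal_inj.
by case: D => *; rewrite cards_disjointU //; lia.
Qed.

Lemma model_sunflower : is_sunflower d (petal C @: (e1 :|: e2)) C.
Proof.
have [d2 cC _ _ _ _ _] := D; split.
- by rewrite card_model_petals; lia.
- by rewrite -card_gt0 cC; lia.
- by move=> E /imsetP [y /model_notin_core yC ->]; rewrite card_petal // cC; lia.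
move=> E1 E2 /imsetP [y _ ->] /imsetP [z _ ->] ne; apply/setP => x.
rewrite !inE; case: (x \in C); rewrite ?orbT ?orbF //.
by apply: contraNF ne => /andP [/eqP <- /eqP <-].
Qed.

Lemma model_core_matching :
  core_matching d (petal C @: (e1 :|: e2)) C [set e1; e2].
Proof.
have [_ _ c1 c2 d1 d2 d12] := D; split.
- by move=> E /set2P [] ->.
- by move=> E /set2P [] ->.
- by move=> E E' /set2P [] -> /set2P [] ->; rewrite ?eqxx // disjoint_sym.
apply/setP => x; rewrite inE; apply/bigcupP/andP.
  case=> E EM xE; have xe : x \in e1 :|: e2.
    by case/set2P: EM xE => -> xE; rewrite inE xE ?orbT.
  split; first exact: model_notin_core.
  by apply/bigcupP; exists (petal C x); rewrite ?imset_f // setU11.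
case=> xC /bigcupP [E /imsetP [y ye ->]].
rewrite /petal in_setU1 (negbTE xC) orbF => /eqP ->.
by case/setUP: ye => ye; [exists e1 | exists e2]; rewrite // !inE eqxx ?orbT.
Qed.

Lemma model_support :
  ms_support (model C e1 e2) = petal C @: (e1 :|: e2) :|: [set e1; e2].
Proof.
apply/setP => E; rewrite !inE /model /model_red imsetU !inE.
by case: (E == e1); case: (E == e2); case: (E \in _); case: (E \in _).
Qed.

Lemma model_skeleton :
  skeleton d (model C e1 e2) C (petal C @: (e1 :|: e2)) [set e1; e2].
Proof.
split; [exact: model_support | exact: model_sunflower | exact: model_core_matching |].
by case: D.
Qed.

Lemma model_petal_not_matching y E :
  y \in e1 :|: e2 -> E \in [set e1; e2] -> (E == petal C y) = false.
Proof.
move=> ye EM; apply: contraNF (petal_notin_matching model_skeleton (imset_f _ ye)).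
by move/eqP <-.
Qed.

Lemma red_at_e2 : model_red C e1 e2 e2 = 1.
Proof.
rewrite /model_red eqxx; case: imsetP => // -[y ye /eqP].
by rewrite model_petal_not_matching // ?inE ?ye ?eqxx ?orbT.
Qed.

Lemma red_at_e1 : model_red C e1 e2 e1 = 0.
Proof.
rewrite /model_red (negbTE model_matching_neq); case: imsetP => // -[y ye /eqP].
by rewrite model_petal_not_matching // ?inE ?ye ?eqxx.
Qed.

Lemma red_at_petal1 y : y \in e1 -> model_red C e1 e2 (petal C y) = 1.
Proof.
move=> ye; rewrite /model_red imset_f // eq_sym model_petal_not_matching //.
  by rewrite inE ye.
by rewrite !inE eqxx orbT.
Qed.

Lemma red_at_petal2 y : y \in e2 -> model_red C e1 e2 (petal C y) = 0.
Proof.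
move=> ye; have yC : y \notin C by apply: model_notin_core; rewrite inE ye orbT.
rewrite /model_red eq_sym model_petal_not_matching ?inE ?ye ?eqxx ?orbT //.
case: imsetP => // -[z ze /(petal_inj yC) eqyz]; have [_ _ _ _ _ _ d12] := D.
by rewrite eqyz (disjointFr d12 ze) in ye.
Qed.

Variant red_spec (E : {set T}) : nat -> Prop :=
  | RedEdge of E = e2 : red_spec E 1
  | RedPetal y of y \in e1 & E = petal C y : red_spec E 1
  | NotRed : red_spec E 0.

Lemma redP E : red_spec E (model_red C e1 e2 E).
Proof.
have [-> | ne] := eqVneq E e2; first by rewrite red_at_e2; exact: RedEdge.
rewrite /model_red (negbTE ne); case: imsetP => [[y ye ->] | _]; last exact: NotRed.
exact: RedPetal ye _.
Qed.

Lemma sum_model_petals (f : {set T} -> nat) :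
  \sum_(E in petal C @: (e1 :|: e2)) f E =
  \sum_(y in e1) f (petal C y) + \sum_(y in e2) f (petal C y).
Proof.
rewrite big_imset => [|y z /model_notin_core yC _]; last exact: petal_inj.
by case: D => *; rewrite sum_disjointU.
Qed.

Lemma sum_red_petals : \sum_(E in petal C @: (e1 :|: e2)) model_red C e1 e2 E = d.
Proof.
rewrite sum_model_petals [X in _ + X]big1 => [|y]; last exact: red_at_petal2.
rewrite addn0 -(model_card_e1 D) -sum1_card; apply: eq_bigr => y.
exact: red_at_petal1.
Qed.

End Model.

Section ModelProperties.
Variables (T : finType) (d : nat) (C e1 e2 : {set T}).
Hypothesis D : model_data d C e1 e2.
Let D' := model_data_sym D.

Lemma model_blue E : model C e1 e2 E - model_red C e1 e2 E = model_red C e2 e1 E.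
Proof. exact: addKn. Qed.

(* The model colouring is balanced: d red and d blue petals at a core vertex, one
   red and one blue edge at every matched vertex. *)
Lemma model_balanced : balanced (model_red C e1 e2) (model_red C e2 e1).
Proof.
apply/(balanced_criterion (model_skeleton D) (fun E => leq_addr _ _)
  (fun E => leq_addl _ _)).
split; first by rewrite (sum_red_petals D) setUC (sum_red_petals D').
move=> e y /set2P [] -> ye.
  by rewrite (red_at_e1 D) (red_at_petal1 D ye) (red_at_e2 D') (red_at_petal2 D' ye).
by rewrite (red_at_e2 D) (red_at_petal2 D ye) (red_at_e1 D') (red_at_petal1 D' ye).
Qed.

Lemma model_bicolouring : balanced_bicolouring (model C e1 e2) (model_red C e1 e2).
Proof.
split=> [E | x]; first exact: leq_addr.
by rewrite (model_balanced x); apply: eq_bigr => E _; rewrite model_blue.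
Qed.

(* A balanced part of the model colouring is a multiple t of it: the matched-vertex
   equations force equal values on all red petals and on all blue petals, and the
   core equation forces these two values to agree.  Since e2 is simple, t = 1. *)
Lemma model_indecomposable : indecomposable (model C e1 e2) (model_red C e1 e2).
Proof.
move=> r b rle ble0 bal [E0 nz].
have ble E : b E <= model_red C e2 e1 E by rewrite -model_blue.
have rm E : r E <= model C e1 e2 E := leq_trans (rle E) (leq_addr _ _).
have bm E : b E <= model C e1 e2 E := leq_trans (ble E) (leq_addl _ _).
have [core matched] := (balanced_criterion (model_skeleton D) rm bm).1 bal.
have r_petal1 y : y \in e1 -> r (petal C y) = b e1.
  move=> ye; have := rle e1; have := ble (petal C y).
  rewrite (red_at_e1 D) (red_at_petal2 D' ye); have := matched e1 y (set21 _ _) ye; lia.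
have b_petal2 y : y \in e2 -> b (petal C y) = r e2.
  move=> ye; have := ble e2; have := rle (petal C y).
  rewrite (red_at_e1 D') (red_at_petal2 D ye); have := matched e2 y (set22 _ _) ye; lia.
have r_petal2 y : y \in e2 -> r (petal C y) = 0.
  by move=> ye; apply/eqP; rewrite -leqn0 -(red_at_petal2 D ye).
have b_petal1 y : y \in e1 -> b (petal C y) = 0.
  by move=> ye; apply/eqP; rewrite -leqn0 -(red_at_petal2 D' ye).
have t_eq : b e1 = r e2.
  move: core; rewrite !(sum_model_petals D) (eq_bigr _ r_petal1) (eq_bigr _ r_petal2).
  rewrite (eq_bigr _ b_petal1) (eq_bigr _ b_petal2) !sum_nat_const.
  rewrite (model_card_e1 D) (model_card_e2 D) !muln0 addn0 add0n => /eqP.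
  by rewrite eqn_pmul2l ?(ltnW (model_dim D)) // => /eqP.
have r_eq E : r E = r e2 * model_red C e1 e2 E.
  move: (rle E); case: (redP D E) => [-> | y ye -> | ]; rewrite ?muln1 ?muln0 //.
    by rewrite r_petal1.
  by rewrite leqn0 => /eqP.
have b_eq E : b E = r e2 * model_red C e2 e1 E.
  move: (ble E); case: (redP D' E) => [-> | y ye -> | ]; rewrite ?muln1 ?muln0 //.
    by rewrite b_petal2.
  by rewrite leqn0 => /eqP.
have t1 : r e2 = 1.
  have := rle e2; rewrite (red_at_e2 D); move: nz; rewrite r_eq b_eq.
  by case: (r e2) => [|[|]] //; rewrite !mul0n.
by move=> E; rewrite r_eq b_eq t1 !mul1n model_blue.
Qed.

Lemma model_primitive : primitive (model C e1 e2).
Proof.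
exists (model_red C e1 e2).
by split; [exact: model_bicolouring | exact: model_indecomposable].
Qed.

Lemma model_shape :
  [/\ #|ms_support (model C e1 e2)| = 2 * d + 2, #|petal C @: (e1 :|: e2)| = 2 * d,
      #|[set e1; e2]| = 2
    & forall E, E \in ms_support (model C e1 e2) -> model C e1 e2 E = 1].
Proof.
have cM : #|[set e1; e2]| = 2 by rewrite cards2 (model_matching_neq D).
split => //; first by rewrite (card_support (model_skeleton D)) (card_model_petals D) cM.
  exact: card_model_petals D.
move=> E; rewrite (model_support D) /model.
case/setUP => [/imsetP [y /setUP [] ye ->] | /set2P [] ->].
- by rewrite (red_at_petal1 D ye) (red_at_petal2 D' ye).
- by rewrite (red_at_petal2 D ye) (red_at_petal1 D' ye).
- by rewrite (red_at_e1 D) (red_at_e2 D').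
- by rewrite (red_at_e2 D) (red_at_e1 D').
Qed.

Lemma model_vertices : vertices (model C e1 e2) = C :|: (e1 :|: e2).
Proof.
by rewrite (vertices_skeleton (model_skeleton D)) /cover bigcup_setU !big_set1.
Qed.

Lemma card_model_vertices : #|C :|: (e1 :|: e2)| = d - 1 + (d + d).
Proof.
have [_ cC c1 c2 d1 d2 d12] := D.
rewrite !cards_disjointU ?cC ?c1 ?c2 // -setI_eq0 setIUr.
by rewrite ![C :&: _]setIC (disjoint_setI0 d1) (disjoint_setI0 d2) setU0.
Qed.

Lemma model_prim_ms_core : prim_ms_core d (model C e1 e2).
Proof.
split; first exact: model_primitive.
exists C, (petal C @: (e1 :|: e2)), [set e1; e2]; split; last exact: model_card_core D.
apply: monomial_of_skeleton (model_skeleton D) _.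
by exists (model_red C e1 e2); apply: model_bicolouring.
Qed.

End ModelProperties.

(* Take e1 with a blue surplus and e2 with a red surplus; the model colouring on
   e1, e2 then fits below the given colouring, so by indecomposability it is all
   of it. *)
Lemma primitive_skeleton_model (T : finType) d (m : {set T} -> nat) C P M :
  skeleton d m C P M -> primitive m ->
  exists e1 e2, model_data d C e1 e2 /\ m =1 model C e1 e2.
Proof.
move=> S [r [bic indec]]; have [rm bal] := bic.
have [_ matched] := (balanced_criterion S rm (fun E => leq_subr (r E) (m E))).1 bal.
have [e1 [e2 [e1M e2M lt1 lt2]]] := opposite_matching_edges S bic indec.
have D : model_data d C e1 e2.
  have ne : e1 != e2 by apply: contraTneq lt2 => <-; lia.
  exact: (ModelData (dim_gt1 S) (card_core S) (card_matching_edge S e1M)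
    (card_matching_edge S e2M) (matching_core_disjoint S e1M)
    (matching_core_disjoint S e2M) (matching_disjoint S e1M e2M ne)).
have red_r E : model_red C e1 e2 E <= r E.
  case: (redP D E) => [-> | y ye -> | //]; first lia.
  by have := matched e1 y e1M ye; lia.
have blue_b E : model_red C e2 e1 E <= m E - r E.
  case: (redP (model_data_sym D) E) => [-> | y ye -> | //]; first lia.
  by have := matched e2 y e2M ye; lia.
have nz : exists E, 0 < model_red C e1 e2 E + model_red C e2 e1 E.
  by exists e2; rewrite (red_at_e2 D).
exists e1, e2; split => // E.
have [red_eq blue_eq] := indec _ _ red_r blue_b (model_balanced D) nz E.
by rewrite /model red_eq blue_eq subnKC.
Qed.

Lemma prim_ms_core_model (T : finType) d (m : {set T} -> nat) : prim_ms_core d m ->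
  exists C e1 e2, model_data d C e1 e2 /\ m =1 model C e1 e2.
Proof.
move=> [prim [C [P [M [ms cC]]]]].
have [e1 [e2 model_m]] := primitive_skeleton_model (skeleton_of_monomial ms cC) prim.
by exists C, e1, e2.
Qed.

Section Isomorphism.
Variables T1 T2 : finType.

Lemma mh_isomorphic_eq (m1 n1 : {set T1} -> nat) (m2 n2 : {set T2} -> nat) :
  m1 =1 n1 -> m2 =1 n2 -> mh_isomorphic n1 n2 -> mh_isomorphic m1 m2.
Proof.
move=> mn1 mn2 [f [inj img mult]]; exists f.
rewrite /vertices (ms_support_eq mn1) (ms_support_eq mn2); split => // E sE.
by rewrite mn1 mn2 mult.
Qed.

Lemma imset_of_card (y0 : T2) (A : {set T1}) (B : {set T2}) :
  #|A| = #|B| -> exists g : T1 -> T2, g @: A = B.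
Proof.
move=> cAB; pose g x := nth y0 (enum B) (index x (enum A)).
have ilt x : x \in A -> index x (enum A) < size (enum B).
  by move=> xA; rewrite -cardE -cAB cardE index_mem mem_enum.
have inj : {in A &, injective g}.
  move=> x x' xA x'A /eqP; rewrite /g nth_uniq ?enum_uniq ?ilt // => /eqP.
  by apply: (index_inj x); rewrite mem_enum.
exists g; apply/eqP; rewrite eqEcard card_in_imset // cAB leqnn andbT.
by apply/subsetP => y /imsetP [x xA ->]; rewrite -mem_enum /g mem_nth ?ilt.
Qed.

Lemma red_imset (F : T1 -> T2) (V C e1 e2 E : {set T1}) :
  {in V &, injective F} -> C :|: (e1 :|: e2) \subset V -> E \subset V ->
  model_red (F @: C) (F @: e1) (F @: e2) (F @: E) = model_red C e1 e2 E.
Proof.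
rewrite !subUset => inj /and3P [CV e1V e2V] EV; have injF := imset_inj_in inj.
have inPV (A : {set T1}) : A \subset V -> A \in powerset V by rewrite inE.
have petals :
    petal (F @: C) @: (F @: e1) = (fun A : {set T1} => F @: A) @: (petal C @: e1).
  by rewrite -!imset_comp; apply: eq_imset => y /=; rewrite /petal imsetU1.
rewrite /model_red (inj_in_eq injF) ?inPV // petals (mem_imset_in injF) ?inPV //.
apply/subsetP => A /imsetP [y ye ->]; rewrite inE /petal subUset sub1set CV andbT.
exact: subsetP e1V y ye.
Qed.

Lemma model_imset (F : T1 -> T2) (V C e1 e2 E : {set T1}) :
  {in V &, injective F} -> C :|: (e1 :|: e2) \subset V -> E \subset V ->
  model (F @: C) (F @: e1) (F @: e2) (F @: E) = model C e1 e2 E.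
Proof.
move=> inj sV sE; rewrite /model !(red_imset inj) //.
by rewrite [e2 :|: e1]setUC.
Qed.

(* Two models with the same d are isomorphic: map C1, e1, f1 onto C2, e2, f2 by
   arbitrary maps; the combined map is injective since both vertex sets have
   3d - 1 elements. *)
Lemma model_iso d (C1 e1 f1 : {set T1}) (C2 e2 f2 : {set T2}) :
  model_data d C1 e1 f1 -> model_data d C2 e2 f2 ->
  mh_isomorphic (model C1 e1 f1) (model C2 e2 f2).
Proof.
move=> D1 D2; have [d2 cC1 ce1 cf1 de1 df1 def] := D1; have [_ cC2 ce2 cf2 _ _ _] := D2.
have /set0Pn [y0 _] : e2 != set0 by rewrite -card_gt0 ce2; lia.
have [gC imC] := imset_of_card y0 (etrans cC1 (esym cC2)).
have [gE imE] := imset_of_card y0 (etrans ce1 (esym ce2)).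
have [gF imF] := imset_of_card y0 (etrans cf1 (esym cf2)).
pose F x := if x \in C1 then gC x else if x \in e1 then gE x else gF x.
have FC : F @: C1 = C2 by rewrite -imC; apply: eq_in_imset => x xC; rewrite /F xC.
have FE : F @: e1 = e2.
  by rewrite -imE; apply: eq_in_imset => x xe /=; rewrite /F (disjointFr de1 xe) xe.
have FF : F @: f1 = f2.
  rewrite -imF; apply: eq_in_imset => x xf /=.
  by rewrite /F (disjointFr df1 xf) (disjointFl def xf).
have injF : {in C1 :|: (e1 :|: f1) &, injective F}.
  apply/imset_injP; rewrite !imsetU FC FE FF.
  by rewrite (card_model_vertices D1) (card_model_vertices D2).
exists F; rewrite (model_vertices D1) (model_vertices D2); split => //.
  by rewrite !imsetU FC FE FF.
by move=> E sE; rewrite -FC -FE -FF (model_imset injF).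
Qed.

End Isomorphism.

Lemma model_exists d :
  1 < d -> exists (T : finType) (C e1 e2 : {set T}), model_data d C e1 e2.
Proof.
move=> d2; pose T := ('I_(d - 1) + ('I_d + 'I_d))%type.
exists T, [set inl i | i : 'I_(d - 1)], [set inr (inl i) | i : 'I_d],
  [set inr (inr i) | i : 'I_d].
split => //.
1-3: by rewrite card_imset ?card_ord // => a b [].
all: rewrite disjoint_subset; apply/subsetP => x /imsetP [a _ ->].
all: by rewrite inE; apply/negP => /imsetP [b _].
Qed.

Theorem mainTheorem9 (d : nat) (hd : 2 <= d) :
  (exists (T : finType) (m : {set T} -> nat), prim_ms_core d m) /\
  (forall (T1 T2 : finType) (m1 : {set T1} -> nat) (m2 : {set T2} -> nat),
      prim_ms_core d m1 -> prim_ms_core d m2 -> mh_isomorphic m1 m2) /\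
  (forall (T : finType) (m : {set T} -> nat) (C : {set T}) (P M : {set {set T}}),
      primitive m -> monomial_sunflower d m C P M -> #|C| = d - 1 ->
      [/\ #|ms_support m| = 2 * d + 2, #|P| = 2 * d, #|M| = 2
        & forall E, E \in ms_support m -> m E = 1]).
Proof.
split; [|split].
- have [T [C [e1 [e2 D]]]] := model_exists hd.
  by exists T, (model C e1 e2); apply: model_prim_ms_core D.
- move=> T1 T2 m1 m2 /prim_ms_core_model [C1 [e1 [f1 [D1 model1]]]].
  move=> /prim_ms_core_model [C2 [e2 [f2 [D2 model2]]]].
  exact: mh_isomorphic_eq model1 model2 (model_iso D1 D2).
move=> T m C P M prim ms cC; have S := skeleton_of_monomial ms cC.
have [e1 [e2 [D model_m]]] := primitive_skeleton_model S prim.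
have [-> ->] := skeleton_unique S (model_skeleton D) model_m.
have [card_supp card_P card_M simple] := model_shape D.
rewrite (ms_support_eq model_m); split => // E /simple <-.
exact: model_m.
Qed.
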